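(* Let $\mathcal{C}$ be a covering of a finite set $E$ and $SH(X)=\bigcup\{K\in\mathcal{C}:K\cap X\neq\emptyset\}$ for $X\subseteq E$. Then $SH(SH(X))=SH(X)$ for all $X\subseteq E$ if and only if $\{I(x):x\in E\}$ forms a partition of $E$, where $I(x)=\bigcup\{K\in\mathcal{C}:x\in K\}$.
   Context: A covering of $E$ is a family of nonempty subsets of $E$ with union $E$. ''$\{I(x):x\in E\}$ forms a partition'' means the distinct sets among the $I(x)$ are pairwise disjoint (their union is $E$ since $x\in I(x)$). *)

From mathcomp Require Import all_boot.
Set Implicit Arguments. Unset Strict Implicit. Unset Printing Implicit Defensive.

Definition covering (T : finType) (C : {set {set T}}) (E : {set T}) : Prop :=
  (forall K, K \in C -> K != set0 /\ K \subset E) /\ cover C = E.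

Definition SH (T : finType) (C : {set {set T}}) (X : {set T}) : {set T} :=
  \bigcup_(K in C | K :&: X != set0) K.

Definition Iset (T : finType) (C : {set {set T}}) (x : T) : {set T} :=
  \bigcup_(K in C | x \in K) K.

From mathcomp Require Import all_boot.

(* Write x ~ y when x and y lie in a common block of C, so that I(x) is the
   ~-class of x and SH(X) is the set of elements ~-related to some point of X.
   On a covering, ~ is reflexive on E and symmetric; both conditions of the
   theorem say exactly that ~ is transitive: SH(SH {x}) = SH {x} is
   I(I(x)) = I(x), and the classes of a reflexive symmetric relation are
   pairwise disjoint iff the relation is transitive. *)

Set Implicit Arguments.
Unset Strict Implicit.
Unset Printing Implicit Defensive.

Section Blocks.

Variables (T : finType) (C : {set {set T}}).

Lemma IsetP x y :
  reflect (exists2 K, K \in C & (x \in K) && (y \in K)) (y \in Iset C x).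
Proof.
apply: (iffP bigcupP) => [[K /andP[KC xK] yK]|[K KC /andP[xK yK]]].
  by exists K; rewrite ?xK.
by exists K; rewrite ?KC.
Qed.

Lemma Iset_sym x y : (y \in Iset C x) = (x \in Iset C y).
Proof.
by apply/IsetP/IsetP => -[K KC /andP[xK yK]]; exists K; rewrite ?xK ?yK.
Qed.

Lemma SH_bigcup (X : {set T}) : SH C X = \bigcup_(x in X) Iset C x.
Proof.
apply/setP => y; apply/bigcupP/bigcupP.
  move=> [K /andP[KC /set0Pn[x /setIP[xK xX]]] yK].
  by exists x => //; apply/IsetP; exists K; rewrite ?xK.
move=> [x xX /IsetP[K KC /andP[xK yK]]]; exists K => //.
by rewrite KC; apply/set0Pn; exists x; apply/setIP.
Qed.

Lemma SH_set1 x : SH C [set x] = Iset C x.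
Proof. by rewrite SH_bigcup big_set1. Qed.

Definition Iset_transitive :=
  forall x y z, y \in Iset C x -> z \in Iset C y -> z \in Iset C x.

Lemma Iset_transitive_sub :
  Iset_transitive -> forall x y, y \in Iset C x -> Iset C y \subset Iset C x.
Proof. by move=> trI x y xy; apply/subsetP => z; apply: trI. Qed.

Lemma Iset_transitive_eq :
  Iset_transitive -> forall x y, y \in Iset C x -> Iset C y = Iset C x.
Proof.
move=> trI x y xy; apply/eqP; rewrite eqEsubset !Iset_transitive_sub //.
by rewrite -Iset_sym.
Qed.

Lemma SH_SH_sub (X : {set T}) :
  Iset_transitive -> SH C (SH C X) \subset SH C X.
Proof.
move=> trI; rewrite [SH C (SH C X)]SH_bigcup; apply/bigcupsP => y.
rewrite SH_bigcup => /bigcupP[x xX xy].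
by rewrite (subset_trans (Iset_transitive_sub trI xy)) // bigcup_sup.
Qed.

Variable E : {set T}.
Hypothesis covC : covering C E.

Lemma Iset_sub x : Iset C x \subset E.
Proof.
apply/subsetP => y /IsetP[K KC /andP[_ yK]].
by have [_ /subsetP] := covC.1 K KC; apply.
Qed.

Lemma mem_Iset_self x : x \in E -> x \in Iset C x.
Proof.
rewrite -covC.2 => /bigcupP[K KC xK].
by apply/IsetP; exists K; rewrite ?xK.
Qed.

Lemma sub_SH (X : {set T}) : X \subset E -> X \subset SH C X.
Proof.
move=> XE; rewrite SH_bigcup; apply/subsetP => x xX; apply/bigcupP.
by exists x; rewrite ?mem_Iset_self ?(subsetP XE).
Qed.

Lemma SH_sub (X : {set T}) : SH C X \subset E.
Proof. by rewrite SH_bigcup; apply/bigcupsP => x _; apply: Iset_sub. Qed.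

Lemma SH_idem_transitive :
  (forall X : {set T}, X \subset E -> SH C (SH C X) = SH C X) <->
  Iset_transitive.
Proof.
split=> [idemSH x y z xy yz | trI X _].
  have xE : x \in E by rewrite (subsetP (Iset_sub y)) // -Iset_sym.
  rewrite -SH_set1 -idemSH ?sub1set // SH_bigcup.
  by apply/bigcupP; exists y; rewrite ?SH_set1.
by apply/eqP; rewrite eqEsubset SH_SH_sub // sub_SH // SH_sub.
Qed.

Lemma partition_IsetE :
  partition [set Iset C x | x in E] E = trivIset [set Iset C x | x in E].
Proof.
have coverI : cover [set Iset C x | x in E] = E.
  apply/eqP; rewrite eqEsubset; apply/andP; split.
    by apply/bigcupsP => _ /imsetP[x _ ->]; apply: Iset_sub.
  apply/subsetP => x xE; apply/bigcupP; exists (Iset C x).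
    exact: imset_f.
  exact: mem_Iset_self.
have set0_notinI : set0 \notin [set Iset C x | x in E].
  apply/imsetP => -[x xE /esym/setP/(_ x)].
  by rewrite inE mem_Iset_self.
by rewrite /partition coverI eqxx set0_notinI andbT.
Qed.

Lemma trivIset_Iset_transitive :
  trivIset [set Iset C x | x in E] <-> Iset_transitive.
Proof.
split=> [/trivIsetP disjI x y z xy yz | trI].
  have yE : y \in E by rewrite (subsetP (Iset_sub x)).
  have xE : x \in E by rewrite (subsetP (Iset_sub y)) // -Iset_sym.
  have [eqIxy | neqIxy] := eqVneq (Iset C x) (Iset C y); first by rewrite eqIxy.
  have := disjI _ _ (imset_f _ xE) (imset_f _ yE) neqIxy.
  by move/disjointFl/(_ (mem_Iset_self yE)); rewrite xy.
apply/trivIsetP => _ _ /imsetP[x _ ->] /imsetP[y _ ->].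
apply: contraR; rewrite -setI_eq0 => /set0Pn[z /setIP[xz yz]].
by rewrite -(Iset_transitive_eq trI xz) -(Iset_transitive_eq trI yz).
Qed.

End Blocks.

Theorem proposition10 (T : finType) (E : {set T}) (C : {set {set T}}) :
  covering C E ->
  ((forall X : {set T}, X \subset E -> SH C (SH C X) = SH C X) <->
   partition [set Iset C x | x in E] E).
Proof.
move=> covC; rewrite partition_IsetE //.
exact: iff_trans (SH_idem_transitive covC)
                 (iff_sym (trivIset_Iset_transitive covC)).
Qed.
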